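(* Let $0 < \epsilon < 1/20$. Then for all sufficiently large $n$ (depending on $\epsilon$), writing $G = (\mathbb{Z}/2\mathbb{Z})^n$ and $N = 2^n$, there is a function $f : G \to [0,1]$ such that every subgroup $H \leq G$ which is $\epsilon$-regular for $f$ satisfies $|G/H| \geq W\!\left(\tfrac12\log_2(1/\epsilon) - 5\right)$.
   Context: For a subgroup $H \leq G$ and $g \in G$ define $f_H^{+g} : H \to [0,1]$ by $f_H^{+g}(x) = f(x+g)$. An element $g \in G$ is an $\epsilon$-regular value for $f$ (with respect to $H$) if $\left|\sum_{x \in H} f_H^{+g}(x)\chi(x)\right| \leq \epsilon|H|$ for every nontrivial character $\chi$ of $H$. $H$ is $\epsilon$-regular for $f$ if the number of $g \in G$ which are not $\epsilon$-regular values is at most $\epsilon N$. $W(t)$ is a tower of twos of height $\lceil t\rceil$: $W(t) = w_{\max(\lceil t\rceil,0)}$ where $w_0 = 1$, $w_{h+1} = 2^{w_h}$. *)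

From HB Require Import structures.
From mathcomp Require Import all_boot all_order all_algebra.
From mathcomp Require Import all_classical all_reals all_analysis.
From mathcomp.real_closed Require Import complex.
Set Implicit Arguments. Unset Strict Implicit. Unset Printing Implicit Defensive.
Import Order.TTheory GRing.Theory Num.Theory.
Local Open Scope ring_scope.

Definition Gn (n : nat) := 'rV['F_2]_n.

Definition is_subgroup (n : nat) (H : {set Gn n}) : Prop :=
  0 \in H /\ (forall x y, x \in H -> y \in H -> x + y \in H)
  /\ (forall x, x \in H -> - x \in H).

(* A character of H: a homomorphism H -> C^* (values taken in R[i]);
   only its values on H matter. *)
Definition is_character (R : rcfType) (n : nat) (H : {set Gn n})
  (chi : Gn n -> R[i]) : Prop :=
  (forall x, x \in H -> chi x != 0) /\
  (forall x y, x \in H -> y \in H -> chi (x + y) = chi x * chi y).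

Definition nontrivial_on (R : rcfType) (n : nat) (H : {set Gn n})
  (chi : Gn n -> R[i]) : Prop := exists2 x, x \in H & chi x != 1.

Definition regular_value (R : rcfType) (n : nat) (f : Gn n -> R)
  (H : {set Gn n}) (eps : R) (g : Gn n) : Prop :=
  forall chi : Gn n -> R[i], is_character H chi -> nontrivial_on H chi ->
    `| \sum_(x in H) ((f (x + g))%:C%C * chi x) | <= ((eps * #|H|%:R)%:C)%C.

Definition regular_subgroup (R : rcfType) (n : nat) (f : Gn n -> R)
  (H : {set Gn n}) (eps : R) : Prop :=
  #|[set g : Gn n | ~~ `[< regular_value f H eps g >]]|%:R <= eps * (2 ^ n)%:R.

Fixpoint w (h : nat) : nat := if h is h'.+1 then 2 ^ (w h') else 1.

Definition W (R : archiRealFieldType) (t : R) : nat :=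
  match Num.ceil t with Posz k => w k | Negz _ => w 0 end.

Definition log2 (R : realType) (x : R) : R := ln x / ln 2.

From HB Require Import structures.
From mathcomp Require Import all_boot all_order all_algebra.
From mathcomp Require Import all_classical all_reals all_analysis.
From mathcomp.real_closed Require Import complex.
From mathcomp Require Import zify lra.
Import Order.TTheory GRing.Theory Num.Theory.
Local Open Scope ring_scope.

(* Cut the coordinates of G = F_2^n into consecutive blocks [offset i, offset (i+1)) whose
   lengths grow like 2^(offset i) / 8, and choose maps A_i from prefixes c in F_2^(offset i)
   to the i-th block such that every nonzero y has <y, A_i c> = 1 for more than
   2^(offset i) / 1024 prefixes c; such maps exist by counting. Let
   f x = sum_(i < S) 4^-(i+1) [<z_i x, A_i (prefix of x)> = 1], z_i x being the i-th block of x.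
   If H is eps-regular, induction on i shows that H vanishes on the first offset i coordinates:
   if z_i h <> 0 for some h in H, then no g whose prefix c satisfies <z_i h, A_i c> = 1 is a
   regular value, as the character x |-> (-1)^<z_i x, A_i c> shows: against it level i of f
   contributes 4^-(i+1) |H| / 2, the lower levels nothing and the higher ones less than a third
   of that. There are too many such g for eps-regularity. Hence |G/H| >= 2^(offset S), and
   offset S grows like a tower of twos. *)

(** * Counting and codes over F_2 *)

Lemma F2_cases (a : 'F_2) : a = 0 \/ a = 1.
Proof. by case: a => [[|[|m]]] // lt_m2; [left | right]; apply/val_inj. Qed.

Lemma F2_addrr (a : 'F_2) : a + a = 0.
Proof. by case: (F2_cases a) => ->; apply/val_inj. Qed.

Lemma card_rV_F2 d : #|'rV['F_2]_d| = (2 ^ d)%N.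
Proof. by rewrite card_mx card_Fp // mul1n. Qed.

Lemma card_bigcup_le {I T : finType} (P : pred I) (F : I -> {set T}) :
  (#|\bigcup_(i | P i) F i| <= \sum_(i | P i) #|F i|)%N.
Proof.
elim/big_rec2: _ => [|i n B _ le_Bn]; first by rewrite cards0.
by rewrite (leq_trans (leq_card_setU _ _)) ?leq_add2l.
Qed.

Lemma card_fibers_eq {T K : finType} (key : T -> K) :
  (forall k1 k2, exists2 g : T -> T, injective g & forall x, key x = k1 -> key (g x) = k2) ->
  forall k, (#|K| * #|[set x | key x == k]| = #|T|)%N.
Proof.
move=> transport k.
have fiber_le k1 k2 : (#|[set x | key x == k1]| <= #|[set x | key x == k2]|)%N.
  have [g inj_g keyg] := transport k1 k2.
  rewrite -(card_imset _ inj_g); apply: subset_leq_card.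
  by apply/fintype.subsetP => y /imsetP[x]; rewrite inE => /eqP/keyg keygx ->; rewrite inE keygx.
rewrite -[#|T|]sum1_card (partition_big key predT) //= -sum_nat_const.
by apply: eq_bigr => k' _; rewrite sum1dep_card; apply/eqP; rewrite eqn_leq !fiber_le.
Qed.

Definition ball_vol (M k : nat) : nat := \sum_(j < k.+1) 'C(M, j).

Lemma card_small_sets (C : finType) k :
  #|[set S : {set C} | (#|S| <= k)%N]| = ball_vol #|C| k.
Proof.
elim: k => [|k IHk].
  by rewrite /ball_vol big_ord1 -card_draws; apply: eq_card => S; rewrite !inE leqn0.
rewrite /ball_vol big_ord_recr /= -/(ball_vol _ _) -IHk -card_draws -cardsUI.
have -> : [set S : {set C} | (#|S| <= k)%N] :&: [set S : {set C} | #|S| == k.+1] = finset.set0.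
  by apply/setP => S; rewrite !inE; case: eqP => [->|]; rewrite ?ltnn ?andbF.
by rewrite cards0 addn0; apply: eq_card => S; rewrite !inE leq_eqVlt ltnS orbC.
Qed.

Definition dot {d} (y a : 'rV['F_2]_d) : 'F_2 := \sum_(k < d) y 0 k * a 0 k.

Lemma dotDl d (y a b : 'rV['F_2]_d) : dot (a + b) y = dot a y + dot b y.
Proof. by rewrite /dot -big_split; apply: eq_bigr => k _; rewrite mxE mulrDl. Qed.

Lemma dotDr d (y a b : 'rV['F_2]_d) : dot y (a + b) = dot y a + dot y b.
Proof. by rewrite /dot -big_split; apply: eq_bigr => k _; rewrite mxE mulrDr. Qed.

Lemma dot0r d (y : 'rV['F_2]_d) : dot y 0 = 0.
Proof. by rewrite /dot big1 // => k _; rewrite mxE mulr0. Qed.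

Lemma exists_dot_eq1 d (y : 'rV['F_2]_d) : y != 0 -> exists e, dot y e = 1.
Proof.
move=> /eqP y_neq0; have [j yj] : exists j, y 0 j != 0.
  apply/existsP; apply: contra_notT y_neq0; rewrite negb_exists => /forallP y0.
  by apply/rowP => j; rewrite mxE; apply/eqP; rewrite -[_ == _]negbK y0.
exists (delta_mx 0 j); rewrite /dot (bigD1 j) //= big1 => [|k /negbTE kj].
  by rewrite mxE !eqxx mulr1 addr0; case: (F2_cases (y 0 j)) yj => ->; rewrite ?eqxx.
by rewrite mxE kj andbF mulr0.
Qed.

Definition dot_support {C : finType} {d} (y : 'rV['F_2]_d) (A : {ffun C -> 'rV['F_2]_d}) :
  {set C} := [set c | dot y (A c) == 1].

Section RandomCode.

Variables (C : finType) (d : nat).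

Local Notation code := {ffun C -> 'rV['F_2]_d}.

Lemma card_dot_support_fiber (y : 'rV['F_2]_d) (S : {set C}) : y != 0 ->
  (2 ^ #|C| * #|[set A : code | dot_support y A == S]| = #|{: code}|)%N.
Proof.
move=> /exists_dot_eq1[e ye1].
have card_sets : #|{: {set C}}| = (2 ^ #|C|)%N.
  by rewrite -[LHS]cardsT -powersetT card_powerset cardsT.
rewrite -card_sets; apply: (card_fibers_eq (dot_support y)) => S1 S2.
pose flip (A : code) := [ffun c => A c + (if (c \in S1) != (c \in S2) then e else 0)].
exists flip => [A1 A2 /ffunP eqA|A suppA].
  by apply/ffunP => c; move: (eqA c); rewrite !ffunE => /addIr.
apply/setP => c; rewrite !inE ffunE dotDr -suppA inE.
case: (F2_cases (dot y (A c))) => ->; case: (c \in S2);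
  by rewrite /= ?ye1 ?dot0r ?addr0 ?add0r ?F2_addrr.
Qed.

Lemma card_low_weight (y : 'rV['F_2]_d) k : y != 0 ->
  (2 ^ #|C| * #|[set A : code | (#|dot_support y A| <= k)%N]| =
   ball_vol #|C| k * #|{: code}|)%N.
Proof.
move=> y_neq0; rewrite -card_small_sets -sum1_card.
rewrite (partition_big (dot_support y) (fun S : {set C} => (#|S| <= k)%N)) => [|A]; last first.
  by rewrite inE.
rewrite big_distrr /= -sum_nat_const; apply: eq_big => [S|S le_Sk]; first by rewrite inE.
rewrite -(card_dot_support_fiber _ S y_neq0) -sum1dep_card; congr (_ * _)%N.
by apply: eq_bigl => A; rewrite inE; case: eqP => [->|]; rewrite ?le_Sk ?andbF.
Qed.

Lemma exists_code k : (2 ^ d * ball_vol #|C| k <= 2 ^ #|C|)%N ->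
  exists A : code, forall y, y != 0 -> (k < #|dot_support y A|)%N.
Proof.
set V := ball_vol #|C| k => count.
pose low y := [set A : code | (#|dot_support y A| <= k)%N].
suff [A /forallP goodA] : exists A : code, [forall y, (y != 0) ==> (k < #|dot_support y A|)%N].
  by exists A => y /(implyP (goodA y)).
apply/existsP; apply: contraT; rewrite negb_exists => /forallP allbad.
have cover : [set: code] = \bigcup_(y | y != 0) low y.
  apply/setP => A; rewrite inE; apply/esym/bigcupP.
  have /existsP[y] := allbad A; rewrite negb_imply -leqNgt => /andP[y_neq0 small].
  by exists y; rewrite ?inE.
have := card_bigcup_le (fun y : 'rV['F_2]_d => y != 0) low.
rewrite -cover cardsT -(leq_pmul2l (expn_gt0 2 #|C|)) big_distrr /=.
rewrite (eq_bigr (fun _ => V * #|{: code}|)%N) => [|y]; last exact: card_low_weight.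
rewrite sum_nat_const cardC1 card_rV_F2.
have code_gt0 : (0 < #|{: code}|)%N by apply/card_gt0P; exists 0.
have V_gt0 : (0 < V)%N by rewrite /V /ball_vol big_ord_recl bin0.
rewrite mulnA leq_pmul2r // => /(leq_trans count).
by rewrite leq_pmul2r // leqNgt ltn_predL expn_gt0.
Qed.

End RandomCode.

(** * Sign characters and geometric weights *)

Definition sign (R : ringType) (b : 'F_2) : R := if b == 0 then 1 else -1.

Lemma signD (R : ringType) : {morph sign R : a b / a + b >-> a * b}.
Proof.
move=> a b; rewrite /sign; case: (F2_cases a) => ->; case: (F2_cases b) => ->;
  by rewrite ?addr0 ?add0r ?F2_addrr ?eqxx ?oner_eq0 /= ?mulr1 ?mul1r ?mulrNN ?mulr1.
Qed.

Lemma normr_sign (R : numDomainType) (b : 'F_2) : `|sign R b| = 1.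
Proof. by rewrite /sign; case: ifP => _; rewrite ?normrN normr1. Qed.

Section F2Functional.

Context {V : finZmodType} {H : {set V}} {lam : V -> 'F_2} {h0 : V}.
Hypotheses (lamD : {morph lam : x y / x + y}) (lam_h0 : lam h0 = 1)
  (H_addh0 : {in H, forall x, x + h0 \in H}).

Lemma card_functional_fibers :
  #|[set x in H | lam x == 0]| = #|[set x in H | lam x == 1]|.
Proof.
have shift (b : 'F_2) :
    (#|[set x in H | lam x == b]| <= #|[set x in H | lam x == (b + 1)%R]|)%N.
  rewrite -(card_imset _ (addIr h0)); apply: subset_leq_card.
  apply/fintype.subsetP => y /imsetP[x]; rewrite inE => /andP[xH /eqP lam_x] ->.
  by rewrite inE H_addh0 // lamD lam_x lam_h0 eqxx.
apply/eqP; rewrite eqn_leq; have := shift 1; rewrite F2_addrr => ->.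
by have := shift 0; rewrite add0r => ->.
Qed.

Lemma sum_F2_functional {R : ringType} (F : 'F_2 -> R) :
  \sum_(x in H) F (lam x) = #|[set x in H | lam x == 0]|%:R * (F 0 + F 1).
Proof.
rewrite (big_setID [set x | lam x == 0]) /=.
have -> : H :&: [set x | lam x == 0] = [set x in H | lam x == 0].
  by apply/setP => x; rewrite !inE.
have -> : H :\: [set x | lam x == 0] = [set x in H | lam x == 1].
  apply/setP => x; rewrite !inE andbC.
  by case: (F2_cases (lam x)) => ->; rewrite ?eqxx ?oner_eq0 // eq_sym oner_eq0.
rewrite (eq_bigr (fun=> F 0)) => [|x]; last by rewrite inE => /andP[_ /eqP->].
rewrite [X in _ + X](eq_bigr (fun=> F 1)) => [|x]; last by rewrite inE => /andP[_ /eqP->].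
by rewrite !sumr_const -card_functional_fibers mulrDr !mulr_natl.
Qed.

End F2Functional.

Lemma regular_value_sign_sum {R : rcfType} {n} {f : Gn n -> R} {H : {set Gn n}} {eps g}
    {lam : Gn n -> 'F_2} {h0} :
  {morph lam : x y / x + y} -> h0 \in H -> lam h0 = 1 -> regular_value f H eps g ->
  `|\sum_(x in H) f (x + g) * sign R (lam x)| <= eps * #|H|%:R.
Proof.
move=> lamD h0H lam_h0 /(_ (fun x => (sign R (lam x))%:C%C)) reg.
have chi_char : is_character H (fun x => (sign R (lam x))%:C%C).
  split=> [x _|x y _ _]; last by rewrite lamD signD rmorphM.
  by rewrite fmorph_eq0 /sign; case: ifP => _; rewrite ?oppr_eq0 oner_eq0.
have chi_nt : nontrivial_on H (fun x => (sign R (lam x))%:C%C).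
  by exists h0 => //; rewrite fmorph_eq1 /sign lam_h0 oner_eq0 /=; apply/negP => /eqP; lra.
have := reg chi_char chi_nt.
rewrite (eq_bigr (fun x => (f (x + g) * sign R (lam x))%:C%C)) => [|x _]; last first.
  by rewrite rmorphM.
rewrite -rmorph_sum => /(le_trans (normc_ge_Re _)); rewrite lecR => le_sum; exact: le_sum.
Qed.

Lemma geometric_sum_inv4 (R : realFieldType) {m S : nat} : (m <= S)%N ->
  3 * \sum_(m <= j < S) (4^-1 : R) ^+ j.+1 + 4^-1 ^+ S = 4^-1 ^+ m.
Proof.
elim: S => [|S IHS]; first by rewrite leqn0 => /eqP->; rewrite big_geq // mulr0 add0r.
rewrite leq_eqVlt => /predU1P[->|le_mS]; first by rewrite big_geq // mulr0 add0r.
rewrite big_nat_recr //= mulrDr -addrA -(IHS le_mS) exprS; congr (_ + _); lra.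
Qed.

(* The terms above i weigh at most a third of the i-th, which is half of 4^-(i+1) N. *)
Lemma dominant_level {R : realFieldType} {S i : nat} {T : nat -> R} {N : R} :
  (i < S)%N -> 0 < N -> (forall j, (j < i)%N -> T j = 0) -> `|T i| * 2 = N ->
  (forall j, `|T j| <= N) ->
  4^-1 ^+ i.+1 * N < 6 * `|\sum_(j < S) 4^-1 ^+ j.+1 * T j|.
Proof.
move=> lt_iS N_gt0 T_below T_i T_le; set q : R := 4^-1.
have q_gt0 : 0 < q by rewrite invr_gt0 ltr0n.
have q_ge0 j : 0 <= q ^+ j by rewrite exprn_ge0 // ltW.
rewrite -(big_mkord xpredT (fun j => q ^+ j.+1 * T j)).
rewrite (big_cat_nat (n := i)) ?(ltnW lt_iS) //= big1_seq ?add0r; last first.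
  by move=> j; rewrite mem_index_iota => /andP[_ /T_below->]; rewrite mulr0.
rewrite big_ltn //; set tail := \sum_(i.+1 <= j < S) _.
have tail_le : `|tail| <= N * \sum_(i.+1 <= j < S) q ^+ j.+1.
  rewrite mulr_sumr; apply: le_trans (ler_norm_sum _ _ _) (ler_sum _ _) => j _.
  by rewrite normrM ger0_norm // [N * _]mulrC ler_wpM2l.
have := lerB_normD (q ^+ i.+1 * T i) tail; rewrite normrM ger0_norm //.
have head : q ^+ i.+1 * `|T i| * 2 = q ^+ i.+1 * N by rewrite -mulrA T_i.
have geom : N * (3 * \sum_(i.+1 <= j < S) q ^+ j.+1 + q ^+ S) = N * q ^+ i.+1.
  by rewrite geometric_sum_inv4.
have := mulr_gt0 N_gt0 (exprn_gt0 S q_gt0); lra.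
Qed.

(** * Blocks of coordinates and the function *)

Section BlockLengths.

Local Open Scope nat_scope.

(* Below 1024 the weight bound [code_weight M = 0] is vacuous, and length M keeps the
   offsets growing. *)
Definition block_len (M : nat) : nat := if M < 1024 then M else M %/ 8.

Definition code_weight (M : nat) : nat := M %/ 1024.

Lemma ball_vol_bound k m : ball_vol (k + m) k * 4 ^ m <= 5 ^ (k + m).
Proof.
rewrite -[5]/(4 + 1) expnDn big_distrl /= /ball_vol.
rewrite (big_ord_widen (k + m).+1 (fun j => 'C(k + m, j) * 4 ^ m)) ?ltnS ?leq_addr //.
rewrite big_mkcond; apply: leq_sum => j _; case: ifP => // le_jk.
by rewrite exp1n muln1 leq_mul2l leq_exp2l //; apply/orP; right; lia.
Qed.

(* The Gilbert-Varshamov condition for [exists_code] with the parameters used at level i. *)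
Lemma ball_vol_block_len_le u :
  2 ^ block_len (2 ^ u) * ball_vol (2 ^ u) (code_weight (2 ^ u)) <= 2 ^ 2 ^ u.
Proof.
have [u_small|u_large] := ltnP u 10.
  have M_small : 2 ^ u < 1024 by rewrite -[1024]/(2 ^ 10) ltn_exp2l.
  by rewrite /block_len M_small /code_weight divn_small // /ball_vol big_ord1 bin0 muln1.
have /dvdnP[t M_eq] : 1024 %| 2 ^ u by rewrite -[1024]/(2 ^ 10) dvdn_exp2l.
have t_gt0 : 0 < t by move: (expn_gt0 2 u); rewrite M_eq muln_gt0 => /andP[].
rewrite /block_len /code_weight M_eq mulnK // ltnNge leq_pmull //=.
rewrite (_ : t * 1024 %/ 8 = t * 128); last by rewrite -[1024]/(128 * 8) mulnA mulnK.
rewrite -(@leq_pmul2r (4 ^ (t * 1023))) ?expn_gt0 // -mulnA.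
rewrite (_ : t * 1024 = t + t * 1023); last by lia.
apply: leq_trans (leq_mul (leqnn _) (ball_vol_bound t (t * 1023))) _.
have five_le : 5 ^ (t + t * 1023) <= 2 ^ (5 * (t * 512)).
  have -> : t + t * 1023 = 2 * (t * 512) by lia.
  by rewrite (expnM 5 2) (expnM 2 5) leq_exp2r ?muln_gt0 ?t_gt0.
apply: leq_trans (leq_mul (leqnn _) five_le) _.
by rewrite -expnD (_ : 4 = 2 ^ 2) // -expnM -expnD leq_exp2l //; lia.
Qed.

Fixpoint offset (i : nat) : nat :=
  if i is i'.+1 then offset i' + block_len (2 ^ offset i') else 0.

Lemma offsetS i : offset i.+1 = offset i + block_len (2 ^ offset i).
Proof. by []. Qed.

Lemma offset_mono : {homo offset : i j / i <= j}.
Proof. by apply: homo_leq => [//|j i k|i]; [exact: leq_trans | exact: leq_addr]. Qed.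

Lemma tower_le_offset j : w j + 3 <= offset j.+3.
Proof.
elim: j => [//|j IHj]; set u := offset j.+3 in IHj *.
have u_ge11 : 11 <= u by apply: (@offset_mono 3).
have -> : offset j.+4 = u + 2 ^ (u - 3).
  rewrite offsetS -/u /block_len ltnNge (@leq_trans (2 ^ 11)) ?leq_exp2l //=.
  by rewrite -[8]/(2 ^ 3) -expnB // (leq_trans _ u_ge11).
rewrite /= addnC leq_add ?leq_exp2l //; lia.
Qed.

End BlockLengths.

Definition coord {n} (x : 'rV['F_2]_n) (t : nat) : 'F_2 :=
  if (insub t : option 'I_n) is Some j then x 0 j else 0.

Definition prefix {n} u (x : 'rV['F_2]_n) : 'rV['F_2]_u := \row_(j < u) coord x j.

Definition pad n {u} (v : 'rV['F_2]_u) : 'rV['F_2]_n := \row_(j < n) coord v j.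

Definition block {n} i (x : 'rV['F_2]_n) : 'rV['F_2]_(block_len (2 ^ offset i)) :=
  \row_k coord x (offset i + k).

Lemma coordD n (x y : 'rV['F_2]_n) t : coord (x + y) t = coord x t + coord y t.
Proof. by rewrite /coord; case: insub => [j|]; rewrite ?mxE ?addr0. Qed.

Lemma coord0 n t : coord (0 : 'rV['F_2]_n) t = 0.
Proof. by rewrite /coord; case: insub => [j|]; rewrite ?mxE. Qed.

Lemma coord_ord n (x : 'rV['F_2]_n) (j : 'I_n) : coord x j = x 0 j.
Proof. by rewrite /coord valK. Qed.

Lemma coord_prefix {n u} (x : 'rV['F_2]_n) {t} :
  (t < u)%N -> coord (prefix u x) t = coord x t.
Proof. by move=> lt_tu; rewrite /coord insubT mxE. Qed.

Lemma prefixD n u (x y : 'rV['F_2]_n) : prefix u (x + y) = prefix u x + prefix u y.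
Proof. by apply/rowP => j; rewrite !mxE coordD. Qed.

Lemma blockD n i (x y : 'rV['F_2]_n) : block i (x + y) = block i x + block i y.
Proof. by apply/rowP => k; rewrite !mxE coordD. Qed.

Lemma prefix_pad n u (v : 'rV['F_2]_u) : (u <= n)%N -> prefix u (pad n v) = v.
Proof.
move=> le_un; apply/rowP => j; rewrite mxE.
by rewrite -[nat_of_ord j]/(nat_of_ord (widen_ord le_un j)) coord_ord mxE /= coord_ord.
Qed.

Lemma prefix_eq0_le {n u v} {x : 'rV['F_2]_n} :
  (u <= v)%N -> prefix v x = 0 -> prefix u x = 0.
Proof.
move=> le_uv x_v0; apply/rowP => j; rewrite !mxE.
by rewrite -(coord_prefix x (leq_trans (ltn_ord j) le_uv)) x_v0 coord0.
Qed.

Lemma prefix_offsetS {n i} {x : 'rV['F_2]_n} :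
  prefix (offset i) x = 0 -> block i x = 0 -> prefix (offset i.+1) x = 0.
Proof.
move=> x_pre0 x_block0; apply/rowP => j; rewrite !mxE.
have [lt_ji|le_ij] := ltnP j (offset i).
  by rewrite -(coord_prefix x lt_ji) x_pre0 coord0.
have lt_k : (j - offset i < block_len (2 ^ offset i))%N.
  by rewrite ltn_subLR // -offsetS.
by move/rowP: x_block0 => /(_ (Ordinal lt_k)); rewrite !mxE /= subnKC.
Qed.

Lemma card_prefix_fiber {n u} (c : 'rV['F_2]_u) : (u <= n)%N ->
  (2 ^ u * #|[set x : 'rV['F_2]_n | prefix u x == c]| = 2 ^ n)%N.
Proof.
move=> le_un; rewrite -!card_rV_F2; apply: card_fibers_eq => c1 c2.
exists (fun x => x + pad n (c2 - c1)) => [|x pre_x]; first exact: addIr.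
by rewrite prefixD prefix_pad // pre_x addrC subrK.
Qed.

Lemma card_prefix_preimage {n u} (B : {set 'rV['F_2]_u}) : (u <= n)%N ->
  (2 ^ u * #|[set x : 'rV['F_2]_n | prefix u x \in B]| = #|B| * 2 ^ n)%N.
Proof.
move=> le_un; rewrite -sum1_card (partition_big (prefix u) [in B]) => [|x]; last first.
  by rewrite inE.
rewrite big_distrr -sum_nat_const; apply: eq_bigr => c c_B.
rewrite -(card_prefix_fiber c le_un) sum1dep_card; congr (_ * _)%N.
by apply: eq_card => x; rewrite !inE; case: eqP => [->|]; rewrite ?c_B ?andbF.
Qed.

Lemma exists_level_code i :
  exists A : {ffun 'rV['F_2]_(offset i) -> 'rV['F_2]_(block_len (2 ^ offset i))},
    [forall y, (y != 0) ==> (code_weight (2 ^ offset i) < #|dot_support y A|)%N].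
Proof.
have [|A codeA] :=
  @exists_code 'rV['F_2]_(offset i) (block_len (2 ^ offset i)) (code_weight (2 ^ offset i)).
  by rewrite card_rV_F2; exact: ball_vol_block_len_le.
by exists A; apply/forallP => y; apply/implyP => y_neq0; exact: codeA.
Qed.

Definition level_code i := xchoose (exists_level_code i).

Lemma code_weight_lt {i} {y : 'rV['F_2]_(block_len (2 ^ offset i))} : y != 0 ->
  (code_weight (2 ^ offset i) < #|dot_support y (level_code i)|)%N.
Proof.
move=> y_neq0; have /forallP/(_ y) := xchooseP (exists_level_code i).
by rewrite y_neq0.
Qed.

Definition level_bit {n} i (x : 'rV['F_2]_n) : 'F_2 :=
  dot (block i x) (level_code i (prefix (offset i) x)).

Lemma level_bit_prefix {n} j (x y : 'rV['F_2]_n) :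
  prefix (offset j.+1) x = prefix (offset j.+1) y -> level_bit j x = level_bit j y.
Proof.
move=> eq_xy; have coord_eq t : (t < offset j.+1)%N -> coord x t = coord y t.
  by move=> lt_t; rewrite -(coord_prefix x lt_t) -(coord_prefix y lt_t) eq_xy.
rewrite /level_bit; have -> : block j x = block j y.
  by apply/rowP => k; rewrite !mxE coord_eq // offsetS ltn_add2l.
have -> : prefix (offset j) x = prefix (offset j) y.
  by apply/rowP => k; rewrite !mxE coord_eq // (leq_trans (ltn_ord k)) // offsetS leq_addr.
by [].
Qed.

Definition tower_fun (R : realFieldType) S {n} (x : 'rV['F_2]_n) : R :=
  \sum_(i < S) 4^-1 ^+ i.+1 * (level_bit i x == 1)%:R.

Lemma tower_fun_bounded (R : realFieldType) S n (x : 'rV['F_2]_n) :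
  0 <= tower_fun R S x <= 1.
Proof.
have q_ge0 j : 0 <= (4^-1 : R) ^+ j by rewrite exprn_ge0 ?invr_ge0.
apply/andP; split; first by apply: sumr_ge0 => i _; rewrite mulr_ge0.
apply: (@le_trans _ _ (\sum_(i < S) (4^-1 : R) ^+ i.+1)).
  by apply: ler_sum => i _; rewrite ler_piMr // lern1 leq_b1.
rewrite -(big_mkord xpredT (fun j => (4^-1 : R) ^+ j.+1)).
have := geometric_sum_inv4 R (leq0n S); have := q_ge0 S; rewrite expr0; lra.
Qed.

(** * Regular subgroups *)

Section IrregularValues.

Context {R : rcfType} {n i : nat} {H : {set Gn n}} {g h0 : Gn n}.

Let lam (x : Gn n) : 'F_2 := dot (block i x) (level_code i (prefix (offset i) g)).

Hypotheses (subH : is_subgroup H) (H_prefix0 : {in H, forall h, prefix (offset i) h = 0})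
  (h0H : h0 \in H) (lam_h0 : lam h0 = 1).

Let lamD : {morph lam : x y / x + y}.
Proof. by move=> x y; rewrite /lam blockD dotDl. Qed.

Let H_addh0 : {in H, forall x, x + h0 \in H}.
Proof. by case: subH => _ [addH _] x xH; exact: addH. Qed.

Let K : R := #|[set x in H | lam x == 0]|%:R.

Let level_sum j : R := \sum_(x in H) (level_bit j (x + g) == 1)%:R * sign R (lam x).

Let level_sum_below j : (j < i)%N -> level_sum j = 0.
Proof.
move=> lt_ji; pose F b : R := (level_bit j g == 1)%:R * sign R b.
have -> : level_sum j = \sum_(x in H) F (lam x).
  apply: eq_bigr => x xH; rewrite /F (@level_bit_prefix _ j (x + g) g) // prefixD.
  by rewrite (prefix_eq0_le (offset_mono _ _ lt_ji) (H_prefix0 x xH)) add0r.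
rewrite (sum_F2_functional lamD lam_h0 H_addh0) /F /sign eqxx oner_eq0 /=.
by rewrite mulrN1 mulr1 subrr mulr0.
Qed.

Let level_bit_at x : x \in H -> level_bit i (x + g) = lam x + level_bit i g.
Proof. by move=> xH; rewrite /level_bit prefixD (H_prefix0 x xH) add0r blockD dotDl. Qed.

Let level_sum_at : `|level_sum i| = K.
Proof.
pose F b : R := (b + level_bit i g == 1)%:R * sign R b.
have -> : level_sum i = \sum_(x in H) F (lam x).
  by apply: eq_bigr => x xH; rewrite level_bit_at.
rewrite (sum_F2_functional lamD lam_h0 H_addh0) normrM ger0_norm ?ler0n //.
rewrite /F /sign eqxx oner_eq0 /=; case: (F2_cases (level_bit i g)) => ->;
  rewrite ?addr0 ?add0r ?F2_addrr eqxx (eq_sym (0 : 'F_2)) oner_eq0 /=;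
  by rewrite ?mulr0n ?mulr1n ?mul0r ?mul1r ?mulr1 ?add0r ?addr0 ?normrN normr1 mulr1.
Qed.

Let card_H : #|H|%:R = K * 2.
Proof.
have := sum_F2_functional lamD lam_h0 H_addh0 (fun=> 1 : R).
by rewrite sumr_const => ->; lra.
Qed.

Let level_sum_le j : `|level_sum j| <= #|H|%:R.
Proof.
rewrite /level_sum -sumr_const; apply: le_trans (ler_norm_sum _ _ _) (ler_sum _ _) => x _.
by rewrite normrM normr_sign mulr1 ger0_norm ?lern1 ?leq_b1.
Qed.

Lemma tower_fun_irregular {S} {eps : R} :
  (i < S)%N -> eps * 6 < 4^-1 ^+ i.+1 -> ~ regular_value (tower_fun R S) H eps g.
Proof.
move=> lt_iS eps_small /(regular_value_sign_sum lamD h0H lam_h0).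
have -> : \sum_(x in H) tower_fun R S (x + g) * sign R (lam x) =
          \sum_(j < S) 4^-1 ^+ j.+1 * level_sum j.
  rewrite /tower_fun; under eq_bigr do rewrite mulr_suml.
  rewrite exchange_big; apply: eq_bigr => j _; rewrite /level_sum mulr_sumr.
  by apply: eq_bigr => x _; rewrite mulrA.
have H_gt0 : 0 < #|H|%:R :> R by rewrite ltr0n card_gt0; apply/set0Pn; exists h0.
have := dominant_level lt_iS H_gt0 level_sum_below _ level_sum_le.
rewrite level_sum_at card_H => /(_ erefl).
rewrite -(ltr_pM2r H_gt0) card_H in eps_small; lra.
Qed.

End IrregularValues.

Lemma le_code_weight (R : realFieldType) (eps : R) b M :
  eps * 1024 <= 1 -> b%:R <= eps * M%:R -> (b <= code_weight M)%N.
Proof.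
move=> eps_1024 le_b; rewrite -ltnS -(ltr_nat R); apply: le_lt_trans le_b _.
have := ltn_ceil M (isT : (0 < 1024)%N); rewrite -(ltr_nat R) natrM.
by have := ler_wpM2r (ler0n R M) eps_1024; rewrite /code_weight; lra.
Qed.

Section RegularSubgroups.

Context {R : rcfType} {S n : nat} {eps : R} {H : {set Gn n}}.

Hypotheses (subH : is_subgroup H) (regH : regular_subgroup (tower_fun R S) H eps)
  (le_offset_n : (offset S <= n)%N) (eps_1024 : eps * 1024 <= 1)
  (eps_6 : eps * 6 < 4^-1 ^+ S).

Lemma regular_block_eq0 i : (i < S)%N -> {in H, forall h, prefix (offset i) h = 0} ->
  {in H, forall h, block i h = 0}.
Proof.
move=> lt_iS H_prefix0.
pose B := [set c | [exists h in H, dot (block i h) (level_code i c) == 1]].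
have le_offset : (offset i <= n)%N := leq_trans (offset_mono _ _ (ltnW lt_iS)) le_offset_n.
have eps_i : eps * 6 < 4^-1 ^+ i.+1.
  by apply: lt_le_trans eps_6 (ler_wiXn2l _ _ lt_iS); rewrite ?invr_ge0 ?invf_le1 ?ler1n.
have B_bad : [set g : Gn n | prefix (offset i) g \in B] \subset
             [set g : Gn n | ~~ `[< regular_value (tower_fun R S) H eps g >]].
  apply/fintype.subsetP => g; rewrite !inE => /existsP[h0 /andP[h0H /eqP lam_h0]].
  by apply/asboolPn; exact: (tower_fun_irregular subH H_prefix0 h0H lam_h0 lt_iS eps_i).
have card_B : (#|B| <= code_weight (2 ^ offset i))%N.
  apply: le_code_weight eps_1024 _.
  have pow_gt0 : 0 < (2 ^ n)%:R :> R by rewrite ltr0n expn_gt0.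
  rewrite -(ler_pM2r pow_gt0) -natrM -(card_prefix_preimage B le_offset) natrM.
  have : #|[set g : Gn n | prefix (offset i) g \in B]|%:R <= eps * (2 ^ n)%:R :> R.
    by apply: le_trans regH; rewrite ler_nat; exact: subset_leq_card B_bad.
  by move/(ler_wpM2l (ler0n R (2 ^ offset i))); lra.
move=> h hH; apply/eqP; apply: contraTT card_B => block_neq0; rewrite -ltnNge.
apply: leq_trans (code_weight_lt block_neq0) (subset_leq_card _).
by apply/fintype.subsetP => c; rewrite !inE => hc; apply/existsP; exists h; rewrite hH.
Qed.

Lemma regular_prefix_eq0 i : (i <= S)%N -> {in H, forall h, prefix (offset i) h = 0}.
Proof.
elim: i => [_ h _|i IHi lt_iS h hH]; first exact: thinmx0.
have H_prefix0 := IHi (ltnW lt_iS).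
exact: (prefix_offsetS (H_prefix0 h hH) (regular_block_eq0 i lt_iS H_prefix0 h hH)).
Qed.

Lemma regular_index_ge : (2 ^ offset S <= #|[set: Gn n]| %/ #|H|)%N.
Proof.
have H_fiber : H \subset [set x : Gn n | prefix (offset S) x == 0].
  by apply/fintype.subsetP => h hH; rewrite inE regular_prefix_eq0.
have H_gt0 : (0 < #|H|)%N by apply/card_gt0P; exists 0; case: subH.
rewrite cardsT card_rV_F2 -(card_prefix_fiber 0 le_offset_n).
apply: leq_trans (leq_div2l _ H_gt0 (subset_leq_card H_fiber)).
by rewrite mulnK // (leq_trans H_gt0 (subset_leq_card H_fiber)).
Qed.

End RegularSubgroups.

Definition index_forced {R : rcfType} (eps : R) (b : nat) : Prop :=
  exists n0 : nat, forall n : nat, (n0 <= n)%N ->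
    exists f : Gn n -> R, (forall x, 0 <= f x <= 1) /\
      forall H : {set Gn n}, is_subgroup H -> regular_subgroup f H eps ->
        (b <= #|[set: Gn n]| %/ #|H|)%N.

Lemma index_forced_le {R : rcfType} {eps : R} {b b' : nat} :
  index_forced eps b' -> (b <= b')%N -> index_forced eps b.
Proof.
move=> [n0 forced] le_b; exists n0 => n le_n; have [f [f01 bound]] := forced n le_n.
by exists f; split=> // H subH regH; exact: leq_trans le_b (bound H subH regH).
Qed.

Lemma index_forced1 (R : rcfType) (eps : R) : index_forced eps 1.
Proof.
exists 0%N => n _; exists (fun=> 0); split=> [x|H [H0 _] _]; first by rewrite lexx ler01.
by rewrite divn_gt0 ?cardsT ?max_card //; apply/card_gt0P; exists 0.
Qed.

Lemma index_forced_offset {R : rcfType} {eps : R} {S} :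
  eps * 1024 <= 1 -> eps * 6 < 4^-1 ^+ S -> index_forced eps (2 ^ offset S).
Proof.
move=> eps_1024 eps_6; exists (offset S) => n le_n.
exists (tower_fun R S); split=> [x|H subH regH]; first exact: tower_fun_bounded.
exact: (regular_index_ge subH regH le_n eps_1024 eps_6).
Qed.

Lemma exp2_lt_of_log2 (R : realType) (x : R) m : 0 < x -> m%:R < log2 x -> 2 ^+ m < x.
Proof.
move=> x_gt0; rewrite /log2 ltr_pdivlMr ?ln_gt0 ?ltr1n // mulr_natl -lnXn //.
by rewrite ltr_ln ?posrE ?exprn_gt0.
Qed.

Lemma small_eps_of_ceil {R : realType} {eps : R} {s} : 0 < eps ->
  Num.ceil (2^-1 * log2 (1 / eps) - 5) = s.+1 ->
  eps * 1024 <= 1 /\ eps * 6 < 4^-1 ^+ s.+3.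
Proof.
move=> eps_gt0 ceil_eq; have := ceilB1_lt (2^-1 * log2 (1 / eps) - 5); rewrite ceil_eq.
have -> : (s.+1%:Z - 1 = s)%R by rewrite -addn1 PoszD addrK.
rewrite -pmulrn => lt_s.
have : 2 ^+ (2 * (s + 5)) < 1 / eps.
  by apply: exp2_lt_of_log2; rewrite ?divr_gt0 // natrM natrD; lra.
rewrite exprM (_ : (2 : R) ^+ 2 = 4); last by rewrite expr2; lra.
rewrite ltr_pdivlMr; last exact: eps_gt0.
rewrite exprD (_ : (4 : R) ^+ 5 = 1024); last by rewrite !exprS expr0; lra.
have pow_ge1 : 1 <= (4 : R) ^+ s by rewrite exprn_ege1 // ler1n.
have := ler_wpM2l (ltW eps_gt0) pow_ge1.
have := mulr_gt0 eps_gt0 (lt_le_trans ltr01 pow_ge1).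
split; first lra.
rewrite exprVn -div1r ltr_pdivlMr; last by rewrite exprn_gt0.
rewrite !exprS; lra.
Qed.

Theorem mainTheorem15 (R : realType) (eps : R) :
  0 < eps -> eps < 1 / 20 ->
  exists n0 : nat, forall n : nat, (n0 <= n)%N ->
    exists f : Gn n -> R,
      (forall x, 0 <= f x <= 1) /\
      forall H : {set Gn n},
        is_subgroup H -> regular_subgroup f H eps ->
        (W (2^-1 * log2 (1 / eps) - 5) <= #|[set: Gn n]| %/ #|H|)%N.
Proof.
move=> eps_gt0 _; change (index_forced eps (W (2^-1 * log2 (1 / eps) - 5))).
rewrite /W; case ceil_eq: (Num.ceil _) => [[|s]|k]; try exact: index_forced1.
have [eps_1024 eps_6] := small_eps_of_ceil eps_gt0 ceil_eq.
apply: index_forced_le (index_forced_offset eps_1024 eps_6) _.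
by rewrite /= leq_exp2l // (leq_trans (leq_addr 3 _) (tower_le_offset s)).
Qed.
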